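(* Let $c>1$ be even and let $K$ be the set partition of $S_c$ whose only part with more than one element is the set of cyclic shifts of the identity, $\{12\cdots c,\ 23\cdots c1,\ \ldots,\ c12\cdots(c-1)\}$. Then the $K$-equivalence on $S_{c+1}$ has only one nontrivial class.
   Context: Permutations are written in one-line notation as words. The order permutation (standardization) of a word $u$ of distinct positive integers of length $\ell$ is the unique $\pi\in S_\ell$ with $\pi_i<\pi_j$ iff $u_i<u_j$. The $K$-equivalence on $S_n$ is the equivalence relation generated by declaring $\phi\equiv\psi$ whenever $\phi=aub$ and $\psi=avb$ for words $a,b,u,v$ with $u,v$ of length $c$ whose order permutations lie in the same part of $K$. A class is nontrivial if it contains more than one element. *)

From mathcomp Require Import all_boot.
From Stdlib Require Import Relations.
Set Implicit Arguments. Unset Strict Implicit. Unset Printing Implicit Defensive.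

(* Permutations of S_n in one-line notation: words over {1..n} using each value once. *)
Definition is_perm (n : nat) (s : seq nat) : Prop := perm_eq s (iota 1 n).

(* Order permutation (standardization) of a word of distinct positive integers:
   the i-th letter is replaced by 1 + #{letters smaller than it}. *)
Definition std (u : seq nat) : seq nat :=
  map (fun x => (count (fun y => y < x) u).+1) u.

(* A set partition K of S_c is given by its "same part" relation. *)
Definition Kstep (c : nat) (sameK : seq nat -> seq nat -> Prop)
    (phi psi : seq nat) : Prop :=
  exists a b u v : seq nat,
    size u = c /\ size v = c /\ phi = a ++ u ++ b /\ psi = a ++ v ++ b /\
    sameK (std u) (std v).

Definition Kequiv (n c : nat) (sameK : seq nat -> seq nat -> Prop) :
    seq nat -> seq nat -> Prop :=
  clos_refl_sym_trans (seq nat)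
    (fun phi psi => is_perm n phi /\ is_perm n psi /\ Kstep c sameK phi psi).

Definition cyc_shift_id (c : nat) (p : seq nat) : Prop :=
  exists2 k, k < c & p = rot k (iota 1 c).

Definition Kcyc (c : nat) (p q : seq nat) : Prop :=
  p = q \/ (cyc_shift_id c p /\ cyc_shift_id c q).

(* A K-move on a word of S_{c+1} acts on a window of c consecutive letters, so
   it keeps either the last or the first letter m fixed, and the window is then
   a rotation of the increasing word of the other c letters.  All rotations of
   one such window are K-equivalent, giving blocks L_m and R_m.  Some rotations
   belong to two blocks: R_{p+1} meets L_{p+2}, R_{p+2} meets L_{p+1}, and
   R_{c+1} meets L_1.  The first two families link L_1 R_2 L_3 ... and
   R_1 L_2 R_3 ...; since c + 1 is odd, these chains end in L_{c+1} and
   R_{c+1}, and the third family joins them.  Moves by a singleton part of K do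
   not change the word, so every nontrivial class is this single one. *)
From mathcomp Require Import all_boot zify.
From Stdlib Require Import Relations.

Lemma leq_count_lt (u : seq nat) a b : a < b ->
  count (fun y => y < a) u + count (pred1 a) u <= count (fun y => y < b) u.
Proof.
move=> ab; elim: u => [|y u IH] //=.
have : (y < a) + (y == a) <= (y < b).
  by case: ltnP => ya; case: eqP => yae; case: ltnP => yb //=; lia.
rewrite /= in IH *; lia.
Qed.

(* Letters compare like their standardized values: a strictly smaller letter
   has strictly fewer letters of [u] below it. *)
Lemma perm_eq_std_inj (u v : seq nat) : perm_eq u v -> std u = std v -> u = v.
Proof.
move=> puv e; have sz : size u = size v by apply: perm_size.
apply: (@eq_from_nth _ 0) => // i lti.
have := congr1 (nth 0 ^~ i) e; rewrite /std !(nth_map 0) -?sz //.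
rewrite -(permP puv) => -[count_eq].
have mem_u x : x \in v -> 0 < count (pred1 x) u.
  by rewrite -(perm_mem puv) -has_count has_pred1.
have ui : nth 0 u i \in v by rewrite -(perm_mem puv) mem_nth.
have vi : nth 0 v i \in v by rewrite mem_nth // -sz.
case: (ltngtP (nth 0 u i) (nth 0 v i)) => // lt.
- by have := leq_count_lt u _ _ lt; have := mem_u _ ui; lia.
- by have := leq_count_lt u _ _ lt; have := mem_u _ vi; lia.
Qed.

Lemma std_rot k s : std (rot k s) = rot k (std s).
Proof.
rewrite /std -map_rot; apply: eq_map => x.
by have /permP -> : perm_eq (rot k s) s by rewrite perm_rot.
Qed.

Lemma std_sorted s : sorted ltn s -> std s = iota 1 (size s).
Proof.
elim: s => [|x s IH] //= /[dup] /path_sorted s_sorted x_path.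
have gt_x : all (fun y => x < y) s := order_path_min ltn_trans x_path.
have count_lt_x : count (fun y => y < x) s = 0.
  apply/eqP; rewrite -leqn0 leqNgt -has_count; apply/hasP => -[y ys /= yx].
  by have := allP gt_x y ys; rewrite ltnNge ltnW.
rewrite /std /= ltnn count_lt_x (iotaDl 1 1) -(IH s_sorted) /std -map_comp.
congr (_ :: _); apply/eq_in_map => y ys /=.
by rewrite (allP gt_x y ys).
Qed.

Lemma perm_eq_std_window {n a u v b} :
  is_perm n (a ++ u ++ b) -> is_perm n (a ++ v ++ b) -> std u = std v -> u = v.
Proof.
move=> pu pv; apply: perm_eq_std_inj.
rewrite -(perm_cat2l a) -(perm_cat2r b) -!catA.
by apply: perm_trans pu _; rewrite perm_sym.
Qed.

Lemma rem_cat_notin (T : eqType) (x : T) (s1 s2 : seq T) :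
  x \notin s1 -> rem x (s1 ++ s2) = s1 ++ rem x s2.
Proof.
elim: s1 => [|y s1 IH] //=; rewrite inE negb_or => /andP [xy xs].
by rewrite eq_sym (negbTE xy) IH.
Qed.

Lemma rem_iota_split p q : rem p.+1 (iota 1 (p.+1 + q)) = iota 1 p ++ iota p.+2 q.
Proof.
rewrite addSnnS iotaD rem_cat_notin; last by rewrite mem_iota; lia.
by rewrite add1n /= eqxx.
Qed.

Lemma iota_rcons m n : iota m n.+1 = iota m n ++ [:: m + n].
Proof. by rewrite -addn1 iotaD. Qed.

Lemma rot_cat_size T (s1 s2 : seq T) k : size s1 = k -> rot k (s1 ++ s2) = s2 ++ s1.
Proof. by move=> <-; rewrite rot_size_cat. Qed.

Notation Keq c := (Kequiv c.+1 c (Kcyc c)).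

Lemma Keq_trans {c x y z} : Keq c x y -> Keq c y z -> Keq c x z.
Proof. exact: rst_trans. Qed.

Lemma Keq_sym {c x y} : Keq c x y -> Keq c y x.
Proof. exact: rst_sym. Qed.

Lemma cyc_shift_id_rot c k : 0 < c -> cyc_shift_id c (rot k (iota 1 c)).
Proof.
move=> c_gt0; case: (ltnP k c) => kc; first by exists k.
by exists 0; rewrite // rot0 rot_oversize // size_iota.
Qed.

Section Blocks.

Variable c : nat.

(* [Lblock m k] and [Rblock m k] run over the blocks L_m and R_m as [k] varies. *)
Definition window (m : nat) : seq nat := rem m (iota 1 c.+1).

Definition Lblock (m k : nat) : seq nat := rot k (window m) ++ [:: m].
Definition Rblock (m k : nat) : seq nat := m :: rot k (window m).

Lemma Keq_cyc_move a u v b :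
  is_perm c.+1 (a ++ u ++ b) -> is_perm c.+1 (a ++ v ++ b) ->
  size u = c -> size v = c -> cyc_shift_id c (std u) -> cyc_shift_id c (std v) ->
  Keq c (a ++ u ++ b) (a ++ v ++ b).
Proof.
move=> pu pv su sv cu cv; apply: rst_step; split; [|split] => //.
by exists a, b, u, v; do 4 split => //; right.
Qed.

Section Letter.

Variable m : nat.
Hypothesis m_letter : 0 < m <= c.+1.

Lemma size_window : size (window m) = c.
Proof. by rewrite /window size_rem ?size_iota // mem_iota; lia. Qed.

Lemma std_window : std (window m) = iota 1 c.
Proof.
rewrite std_sorted ?size_window // /window rem_filter ?iota_uniq //.
exact: sorted_filter ltn_trans _ _ (iota_ltn_sorted 1 c.+1).
Qed.

Lemma perm_window : perm_eq (window m ++ [:: m]) (iota 1 c.+1).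
Proof.
rewrite perm_catC perm_sym; apply: perm_to_rem.
by rewrite mem_iota; lia.
Qed.

Lemma Lblock_perm k : is_perm c.+1 (Lblock m k).
Proof. by apply: perm_trans perm_window; rewrite perm_cat2r perm_rot. Qed.

Lemma Rblock_perm k : is_perm c.+1 (Rblock m k).
Proof.
apply: perm_trans perm_window.
by rewrite /Rblock -cat1s perm_catC perm_cat2r perm_rot.
Qed.

Lemma window_std_rot u k : perm_eq (u ++ [:: m]) (iota 1 c.+1) ->
  std u = rot k (iota 1 c) -> u = rot k (window m).
Proof.
move=> pu su; apply: perm_eq_std_inj; last by rewrite su std_rot std_window.
rewrite perm_sym perm_rot -(perm_cat2r [:: m]).
by apply: perm_trans perm_window _; rewrite perm_sym.
Qed.

Hypothesis c_gt0 : 0 < c.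

Lemma Keq_Lblock_rot k : Keq c (Lblock m k) (Lblock m 0).
Proof.
rewrite /Lblock -(cat0s (rot k _ ++ _)) -(cat0s (rot 0 _ ++ _)).
apply: Keq_cyc_move; rewrite ?cat0s ?size_rot ?size_window ?std_rot ?std_window //.
all: try exact: cyc_shift_id_rot.
all: exact: Lblock_perm.
Qed.

Lemma Keq_Rblock_rot k : Keq c (Rblock m k) (Rblock m 0).
Proof.
rewrite /Rblock -cat1s -(cats0 (rot k _)) -(cats0 (rot 0 _)).
apply: Keq_cyc_move; rewrite ?cats0 ?size_rot ?size_window ?std_rot ?std_window //.
all: try exact: cyc_shift_id_rot.
all: exact: Rblock_perm.
Qed.

End Letter.
End Blocks.

Lemma Rblock_Lblock_succ p q :
  Rblock (p.+1 + q) p.+1 p.+1 = Lblock (p.+1 + q) p.+2 p.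
Proof.
rewrite /Rblock /Lblock /window.
have -> : rem p.+1 (iota 1 (p.+1 + q).+1) = (iota 1 p ++ [:: p.+2]) ++ iota p.+3 q.
  by rewrite -addnS rem_iota_split -catA.
have -> : rem p.+2 (iota 1 (p.+1 + q).+1) = iota 1 p ++ p.+1 :: iota p.+3 q.
  by rewrite -addSn rem_iota_split iota_rcons -catA add1n.
rewrite rot_cat_size ?size_cat ?size_iota ?addn1 //.
by rewrite rot_cat_size ?size_iota // -!catA.
Qed.

Lemma Rblock_Lblock_pred p q :
  Rblock (p.+1 + q) p.+2 p.+1 = Lblock (p.+1 + q) p.+1 p.
Proof.
rewrite /Rblock /Lblock /window.
have -> : rem p.+2 (iota 1 (p.+1 + q).+1) = iota 1 p.+1 ++ iota p.+3 q.
  by rewrite -addSn rem_iota_split.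
have -> : rem p.+1 (iota 1 (p.+1 + q).+1) = iota 1 p ++ p.+2 :: iota p.+3 q.
  by rewrite -addnS rem_iota_split.
rewrite !rot_cat_size ?size_iota //.
by rewrite iota_rcons -catA add1n.
Qed.

Lemma Rblock_last_Lblock_first c : 1 < c -> Rblock c c.+1 1 = Lblock c 1 c.-1.
Proof.
case: c => [|[|d]] // _; rewrite /Rblock /Lblock /window.
have -> : rem d.+3 (iota 1 d.+3) = iota 1 d.+2.
  by rewrite -[X in iota 1 X](addn0 d.+3) rem_iota_split cats0.
have -> : rem 1 (iota 1 d.+3) = iota 2 d.+2 by [].
rewrite [iota 1 d.+2]/= (@rot_cat_size _ [:: 1]) //.
by rewrite iota_rcons rot_cat_size ?size_iota // -catA.
Qed.

Section Chain.

Variable c : nat.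
Hypothesis c_gt1 : 1 < c.
Hypothesis c_even : ~~ odd c.

Let c_gt0 : 0 < c. Proof. exact: ltnW. Qed.

Lemma Keq_block_chain m : 0 < m <= c.+1 ->
  Keq c (Lblock c m 0) (if odd m then Lblock c 1 0 else Rblock c 1 0) /\
  Keq c (Rblock c m 0) (if odd m then Rblock c 1 0 else Lblock c 1 0).
Proof.
elim: m => [//|[|p] IH m_letter]; first by split; apply: rst_refl.
have [IHL IHR] := IH ltac:(lia).
have [p_lt_c p1_letter] : p < c /\ 0 < p.+1 <= c.+1 by lia.
have succ := Rblock_Lblock_succ p (c - p.+1); rewrite subnKC // in succ.
have pred := Rblock_Lblock_pred p (c - p.+1); rewrite subnKC // in pred.
rewrite [odd p.+2]/= negbK; split.
- apply: Keq_trans (Keq_sym (Keq_Lblock_rot _ _ m_letter c_gt0 p)) _.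
  rewrite -succ; apply: Keq_trans (Keq_Rblock_rot _ _ p1_letter c_gt0 _) _.
  by move: IHR; rewrite [odd p.+1]/=; case: (odd p).
- apply: Keq_trans (Keq_sym (Keq_Rblock_rot _ _ m_letter c_gt0 p.+1)) _.
  rewrite pred; apply: Keq_trans (Keq_Lblock_rot _ _ p1_letter c_gt0 _) _.
  by move: IHL; rewrite [odd p.+1]/=; case: (odd p).
Qed.

Lemma Keq_Rblock_Lblock_first : Keq c (Rblock c 1 0) (Lblock c 1 0).
Proof.
have last_letter : 0 < c.+1 <= c.+1 by rewrite leqnn.
have [_ chain] := Keq_block_chain _ last_letter; rewrite /= c_even in chain.
apply: Keq_trans (Keq_sym chain) _.
apply: Keq_trans (Keq_sym (Keq_Rblock_rot _ _ last_letter c_gt0 1)) _.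
rewrite Rblock_last_Lblock_first //; exact: Keq_Lblock_rot.
Qed.

Lemma Keq_blocks m : 0 < m <= c.+1 ->
  Keq c (Lblock c m 0) (Lblock c 1 0) /\ Keq c (Rblock c m 0) (Lblock c 1 0).
Proof.
move=> m_letter; have [chainL chainR] := Keq_block_chain _ m_letter.
have R1_L1 := Keq_Rblock_Lblock_first.
by case: (odd m) chainL chainR => chainL chainR; split => //;
  apply: Keq_trans R1_L1.
Qed.

Lemma Keq_cyc_window a u b : is_perm c.+1 (a ++ u ++ b) -> size u = c ->
  cyc_shift_id c (std u) -> Keq c (a ++ u ++ b) (Lblock c 1 0).
Proof.
move=> x_perm su [k _ std_u].
have letter m s : m \in s -> perm_eq s (iota 1 c.+1) -> 0 < m <= c.+1.
  by move=> ms /perm_mem/(_ m); rewrite ms mem_iota; lia.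
have := perm_size x_perm; rewrite size_iota !size_cat su.
case: a x_perm => [|m [|? ?]] /= x_perm size_ab; last by lia.
- case: b x_perm size_ab => [|m [|? ?]] //= x_perm size_b; try lia.
  have m_letter : 0 < m <= c.+1.
    by apply: letter x_perm; rewrite mem_cat mem_seq1 eqxx orbT.
  rewrite (window_std_rot _ _ m_letter _ _ x_perm std_u).
  apply: Keq_trans (Keq_Lblock_rot _ _ m_letter c_gt0 k) _.
  by case: (Keq_blocks _ m_letter).
- case: b x_perm size_ab => [|? ?] //= x_perm size_b; last by lia.
  rewrite cats0 in x_perm *.
  have m_letter : 0 < m <= c.+1 by apply: letter x_perm; rewrite mem_head.
  have u_perm : perm_eq (u ++ [:: m]) (iota 1 c.+1) by rewrite perm_catC.
  rewrite (window_std_rot _ _ m_letter _ _ u_perm std_u).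
  apply: Keq_trans (Keq_Rblock_rot _ _ m_letter c_gt0 k) _.
  by case: (Keq_blocks _ m_letter).
Qed.

Lemma Keq_eq_or_Lblock_first x y : Keq c x y ->
  x = y \/ Keq c x (Lblock c 1 0) /\ Keq c y (Lblock c 1 0).
Proof.
elim=> {x y} [x y [x_perm [y_perm [a [b [u [v [su [sv [ex [ey Kuv]]]]]]]]]]|x|x y _|x y z _].
- subst x y; case: Kuv => [std_uv | [cu cv]].
    by left; rewrite (perm_eq_std_window x_perm y_perm std_uv).
  by right; split; apply: Keq_cyc_window.
- by left.
- by case=> [-> | [xb yb]]; [left | right].
- case=> [exy | [xb yb]] _ [eyz | [yb' zb]].
  + by left; rewrite exy.
  + by right; rewrite exy; split.
  + by right; rewrite -eyz; split.
  + by right; split.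
Qed.

End Chain.

Lemma Lblock_rot1_neq c : 1 < c -> Lblock c 1 1 <> Lblock c 1 0.
Proof. by case: c => [|[|d]] // _; rewrite /Lblock /window /= rot1_cons. Qed.

Theorem corollary2p6 (c : nat) :
  1 < c -> ~~ odd c ->
  (exists phi psi : seq nat,
     is_perm c.+1 phi /\ is_perm c.+1 psi /\ phi <> psi /\
     Kequiv c.+1 c (Kcyc c) phi psi) /\
  (forall x y z w : seq nat,
     is_perm c.+1 x -> is_perm c.+1 y -> is_perm c.+1 z -> is_perm c.+1 w ->
     x <> y -> Kequiv c.+1 c (Kcyc c) x y ->
     z <> w -> Kequiv c.+1 c (Kcyc c) z w ->
     Kequiv c.+1 c (Kcyc c) x z).
Proof.
move=> c_gt1 c_even; have first_letter : 0 < 1 <= c.+1 by [].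
split.
- exists (Lblock c 1 1), (Lblock c 1 0).
  do !split; try exact: Lblock_perm.
    exact: Lblock_rot1_neq.
  exact: Keq_Lblock_rot _ _ first_letter (ltnW c_gt1) 1.
- move=> x y z w _ _ _ _ x_neq_y Kxy z_neq_w Kzw.
  have [//|[x_base _]] := Keq_eq_or_Lblock_first _ c_gt1 c_even _ _ Kxy.
  have [//|[z_base _]] := Keq_eq_or_Lblock_first _ c_gt1 c_even _ _ Kzw.
  exact: Keq_trans x_base (Keq_sym z_base).
Qed.
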